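(* Let $f:\mathbb{R}^n\to\mathbb{R}^n$ be continuous and let $\mu\ge0$. Suppose that for every $x\in\mathbb{R}^n$, $f$ admits a strict $\mu$-estimator $h_x$ at $x$ which is strongly regular around $x$, and that $$\sigma_f:=\inf_{x\in\mathbb{R}^n}\operatorname{lop}(h_x,x)>\mu.$$ Then $f$ is a bijection of $\mathbb{R}^n$ onto $\mathbb{R}^n$ and $f^{-1}$ is Lipschitz continuous on $\mathbb{R}^n$ with constant $(\sigma_f-\mu)^{-1}$.
   Context: $B^\circ(x,r)$ denotes the open ball. $\operatorname{lip}(g,\bar x)$ is the infimum of all $\ell>0$ such that $\|g(x_1)-g(x_2)\|\le\ell\|x_1-x_2\|$ on some neighbourhood of $\bar x$ ($+\infty$ if none). Given $\mu\ge0$, $h$ is a strict $\mu$-estimator of $f$ at $\bar x$ if $h(\bar x)=f(\bar x)$ and $\operatorname{lip}(f-h,\bar x)\le\mu$. $h$ is linearly open around $\bar x$ if there exist $\alpha>0$ and neighbourhoods $U$ of $\bar x$, $V$ of $h(\bar x)$ with $B^\circ(h(x),\alpha r)\cap V\subseteq h(B^\circ(x,r))$ for all $x\in U$, $r>0$; $\operatorname{lop}(h,\bar x)$ is the supremum of such $\alpha$ ($0$ if none). $h$ is strongly regular around $\bar x$ if it is linearly open around $\bar x$ and there exist neighbourhoods $U$ of $\bar x$ and $V$ of $h(\bar x)$ such that $h^{-1}(y)\cap U$ is a singleton for every $y\in V$. *)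

(* R^n is 'rV[R]_n with its standard (product)
   topology; the norm used for balls and Lipschitz estimates is the
   Euclidean norm [enorm]. *)
From HB Require Import structures.
From mathcomp Require Import all_boot all_order all_algebra.
From mathcomp Require Import all_classical all_reals all_analysis.
Set Implicit Arguments. Unset Strict Implicit. Unset Printing Implicit Defensive.
Import Order.TTheory GRing.Theory Num.Theory numFieldNormedType.Exports.
Local Open Scope classical_set_scope.
Local Open Scope ring_scope.

Section Defs.
Variables (R : realType) (n : nat).
Local Notation V := 'rV[R]_n.

Definition enorm (v : V) : R := Num.sqrt (\sum_(i < n) v ord0 i ^+ 2).

Definition oball (x : V) (r : R) : set V := [set y | enorm (y - x) < r].

Definition lip_near (g : V -> V) (xb : V) (l : R) : Prop :=
  exists U : set V, nbhs xb U /\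
    forall x1 x2, U x1 -> U x2 -> enorm (g x1 - g x2) <= l * enorm (x1 - x2).

Definition lip (g : V -> V) (xb : V) : \bar R :=
  ereal_inf [set (l%:E)%E | l in [set l : R | 0 < l /\ lip_near g xb l]].

Definition strict_estimator (mu : R) (f h : V -> V) (xb : V) : Prop :=
  h xb = f xb /\ (lip (fun x => (f x - h x)%R) xb <= mu%:E)%E.

Definition lin_open_with (h : V -> V) (xb : V) (alpha : R) : Prop :=
  exists (U W : set V), nbhs xb U /\ nbhs (h xb) W /\
    forall x r, U x -> 0 < r -> oball (h x) (alpha * r) `&` W `<=` h @` oball x r.

Definition lin_open (h : V -> V) (xb : V) : Prop :=
  exists2 alpha, 0 < alpha & lin_open_with h xb alpha.

Definition lop (h : V -> V) (xb : V) : \bar R :=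
  ereal_sup ([set 0%E] `|`
    [set (a%:E)%E | a in [set a : R | 0 < a /\ lin_open_with h xb a]]).

Definition strongly_regular (h : V -> V) (xb : V) : Prop :=
  lin_open h xb /\
  exists (U W : set V), nbhs xb U /\ nbhs (h xb) W /\
    forall y, W y -> exists! x, U x /\ h x = y.

End Defs.

(* Fix [c] with [0 < c < sigma - mu]. Near every [x], [f] is the strongly regular map
   [h x] perturbed by a map that is [l]-Lipschitz with [l < lop (h x) x - c]; hence [f] is
   locally injective and covers linearly at rate [c]: every [y] close to [f x] is [f z] for
   some [z] with [c |z - x| <= |y - f x|].  Minimising [|f z - y|] over the compact set
   where [|f z - y| + c |z - x| <= |f x - y|] makes this covering global, which gives
   surjectivity and, once [f] is injective, [c |f^-1 y1 - f^-1 y2| <= |y1 - y2|] for every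
   such [c].
   Injectivity: if [f a = f b], contract the loop [s |-> f (a + s (b - a))] radially onto
   [f a] and lift the radii step by step from [a].  Uniform local injectivity on a compact
   set forces the lifted radius towards [f (a + s (b - a))] to end at [a + s (b - a)] for
   every [s]; at [s = 1] the radius is constant, so its lift ends at [a], and [b = a]. *)

From mathcomp Require Import all_boot all_order all_algebra.
From mathcomp Require Import all_classical all_reals all_analysis.
From mathcomp Require Import ring lra.
Import Order.TTheory GRing.Theory Num.Theory numFieldNormedType.Exports.
Local Open Scope classical_set_scope.
Local Open Scope ring_scope.
Set Implicit Arguments. Unset Strict Implicit. Unset Printing Implicit Defensive.

Section EuclideanNorm.
Variables (R : realType) (n : nat).
Local Notation V := 'rV[R]_n.
Local Notation en := (@enorm R n).

Lemma enorm_ge0 (v : V) : 0 <= en v.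
Proof. exact: sqrtr_ge0. Qed.

Lemma enorm0 : en 0 = 0.
Proof. by rewrite /enorm big1 ?sqrtr0 // => i _; rewrite mxE expr0n. Qed.

Lemma enormN (v : V) : en (- v) = en v.
Proof. by congr Num.sqrt; apply: eq_bigr => i _; rewrite mxE sqrrN. Qed.

Lemma enorm_distC (u v : V) : en (u - v) = en (v - u).
Proof. by rewrite -enormN opprB. Qed.

Lemma enorm_sqr (v : V) : en v ^+ 2 = \sum_(i < n) v ord0 i ^+ 2.
Proof. by rewrite sqr_sqrtr // sumr_ge0 // => i _; rewrite sqr_ge0. Qed.

Lemma enorm0_eq0 (v : V) : en v = 0 -> v = 0.
Proof.
move=> /eqP; rewrite /enorm sqrtr_eq0 => le_sum0.
have sum0 : \sum_(i < n) v ord0 i ^+ 2 = 0.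
  by apply/eqP; rewrite eq_le le_sum0 sumr_ge0 // => i _; rewrite sqr_ge0.
apply/rowP => i; rewrite mxE.
have /eqP := @psumr_eq0P _ _ xpredT _ (fun j _ => sqr_ge0 (v ord0 j)) sum0 i isT.
by rewrite sqrf_eq0 => /eqP.
Qed.

Lemma enormZ (k : R) (v : V) : en (k *: v) = `|k| * en v.
Proof.
rewrite /enorm (eq_bigr (fun i => k ^+ 2 * v ord0 i ^+ 2)); last first.
  by move=> i _; rewrite mxE exprMn.
by rewrite -mulr_sumr sqrtrM ?sqr_ge0 // sqrtr_sqr.
Qed.

Lemma enorm_dot_le (u v : V) :
  \sum_(i < n) u ord0 i * v ord0 i <= en u * en v.
Proof.
set A := en u; set B := en v.
have [A0 B0] : 0 <= A /\ 0 <= B by split; exact: enorm_ge0.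
have [/eqP|AB0] := eqVneq (A * B) 0.
  by rewrite mulf_eq0 => /orP[] /eqP /enorm0_eq0 ->;
    rewrite big1 ?mulr_ge0 // => i _; rewrite mxE ?mul0r ?mulr0.
(* [2 A B u_i v_i <= B^2 u_i^2 + A^2 v_i^2], summed over [i] *)
have AB2 : 0 < 2 * (A * B) by rewrite mulr_gt0 // lt0r AB0 mulr_ge0.
rewrite -(ler_pM2l AB2) mulr_sumr.
apply: (@le_trans _ _ (\sum_(i < n) (u ord0 i ^+ 2 * B ^+ 2 + v ord0 i ^+ 2 * A ^+ 2))).
  apply: ler_sum => i _; rewrite -subr_ge0.
  have -> : u ord0 i ^+ 2 * B ^+ 2 + v ord0 i ^+ 2 * A ^+ 2
            - 2 * (A * B) * (u ord0 i * v ord0 i) = (u ord0 i * B - v ord0 i * A) ^+ 2.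
    by rewrite /GRing.exp /=; ring.
  exact: sqr_ge0.
rewrite big_split /= -!mulr_suml -!enorm_sqr -/A -/B.
by rewrite le_eqVlt; apply/orP; left; apply/eqP; ring.
Qed.

Lemma ler_enormD (u v : V) : en (u + v) <= en u + en v.
Proof.
have [A0 B0] : 0 <= en u /\ 0 <= en v by split; exact: enorm_ge0.
rewrite -(ger0_norm (addr_ge0 A0 B0)) -sqrtr_sqr {1}/enorm ler_sqrt ?sqr_ge0 //.
rewrite (eq_bigr (fun i => u ord0 i ^+ 2 + v ord0 i ^+ 2 + 2 * (u ord0 i * v ord0 i))).
  rewrite !big_split /= -mulr_sumr -!enorm_sqr.
  have -> : (en u + en v) ^+ 2 = en u ^+ 2 + en v ^+ 2 + 2 * (en u * en v).
    by rewrite /GRing.exp /=; ring.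
  by rewrite lerD2l ler_pM2l // enorm_dot_le.
by move=> i _; rewrite mxE /GRing.exp /=; ring.
Qed.

Lemma ler_enormB (u v : V) : en (u - v) <= en u + en v.
Proof. by rewrite -(enormN v) ler_enormD. Qed.

Lemma ler_enorm_distD (u v w : V) : en (v - w) <= en (v - u) + en (u - w).
Proof. by rewrite -[v - w](subrKA u) ler_enormD. Qed.

Lemma ler_enorm_dist_dist (u v : V) : `|en u - en v| <= en (u - v).
Proof.
have := ler_enorm_distD v u 0; have := ler_enorm_distD u v 0.
rewrite !subr0 [en (v - u)]enorm_distC => le1 le2.
by rewrite ler_norml; apply/andP; split; lra.
Qed.

Lemma mx_norm_le_enorm (v : V) : `|v| <= en v.
Proof.
rewrite [`|v|]mx_normrE; apply: bigmax_le => [|[i j] _]; first exact: enorm_ge0.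
rewrite /= (ord1 i) -sqrtr_sqr ler_sqrt ?sumr_ge0 // => [|k _]; last exact: sqr_ge0.
by rewrite (bigD1 j) //= lerDl sumr_ge0 // => k _; rewrite sqr_ge0.
Qed.

Lemma enorm_le_mx_norm (v : V) : en v <= n%:R * `|v|.
Proof.
have v0 : 0 <= `|v| := normr_ge0 v.
rewrite -(ger0_norm (mulr_ge0 (ler0n _ n) v0)) -sqrtr_sqr ler_sqrt ?sqr_ge0 //.
apply: (@le_trans _ _ (\sum_(i < n) `|v| ^+ 2)).
  apply: ler_sum => i _; rewrite -real_normK ?num_real //.
  apply: lerXn2r; rewrite ?nnegrE ?normr_ge0 // [`|v|]mx_normrE.
  exact: (@le_bigmax _ _ _ 0 (fun ij : 'I_1 * 'I_n => `|v ij.1 ij.2|) (ord0, i)).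
rewrite sumr_const card_ord exprMn -mulr_natl mulr1 -[_ *+ n]mulr_natl.
rewrite ler_wpM2r ?sqr_ge0 // -natrX ler_nat.
by case: n => // k; rewrite expnS leq_pmulr.
Qed.

End EuclideanNorm.

Section EuclideanTopology.
Variables (R : realType) (n : nat).
Local Notation V := 'rV[R]_n.
Local Notation en := (@enorm R n).

(* The library topology on ['rV_n] is that of the sup norm, which is equivalent to
   [enorm]. *)
Lemma nbhs_enormP (x : V) (U : set V) :
  nbhs x U <-> exists2 e, 0 < e & forall y, en (y - x) < e -> U y.
Proof.
split=> [/nbhs_ballP [e e0 sub]|[e e0 sub]].
  exists e => // y xy; apply: sub.
  by rewrite -ball_normE /ball_ /= -normrN opprB (le_lt_trans (mx_norm_le_enorm _)).
have n1 : 0 < n%:R + 1 :> R by rewrite ltr_wpDl.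
apply/nbhs_ballP; exists (e / (n%:R + 1)) => [|y]; first by rewrite /= divr_gt0.
rewrite -ball_normE /ball_ /= -normrN opprB ltr_pdivlMr // => xy; apply: sub.
apply: le_lt_trans (enorm_le_mx_norm _) (le_lt_trans _ xy).
by rewrite mulrC; apply: ler_wpM2l; rewrite ?normr_ge0 ?lerDl.
Qed.

Lemma continuous_enorm_delta (f : V -> V) : continuous f ->
  forall x e, 0 < e -> exists2 d, 0 < d & forall y, en (y - x) < d -> en (f y - f x) < e.
Proof.
move=> cf x e e0; have /(cf x)/nbhs_enormP[d d0 fd] : nbhs (f x) [set z | en (z - f x) < e].
  by apply/nbhs_enormP; exists e.
by exists d.
Qed.

Lemma enorm_delta_continuous (F : V -> R) :
  (forall x e, 0 < e -> exists2 d, 0 < d & forall y, en (y - x) < d -> `|F y - F x| < e) ->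
  continuous F.
Proof.
move=> Fd x A /nbhs_ballP [e e0 sub]; have [d d0 xd] := Fd x e e0.
by apply/nbhs_enormP; exists d => // y /xd Fxy; apply: sub; rewrite -ball_normE /= distrC.
Qed.

Lemma continuous_enorm_dist (f : V -> V) (y : V) :
  continuous f -> continuous (fun z => en (f z - y)).
Proof.
move=> cf; apply: enorm_delta_continuous => z e e0.
have [d d0 fd] := continuous_enorm_delta cf z e0; exists d => // w /fd fwz.
by rewrite (le_lt_trans (ler_enorm_dist_dist _ _)) // opprB addrA subrK.
Qed.

Lemma enorm_bounded_compact (A : set V) (u : V) (r : R) :
  closed A -> (forall z, A z -> en (z - u) <= r) -> compact A.
Proof.
move=> cA Ar; apply: bounded_closed_compact => //.
apply: (@filterS _ _ _ [set M | r + en u <= M]); last first.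
  by apply: nbhs_pinfty_ge; rewrite num_real.
move=> M /= rM z /Ar zr; apply: (le_trans (mx_norm_le_enorm _)); apply: le_trans rM.
by have := ler_enorm_distD u z 0; rewrite !subr0; lra.
Qed.

(* A finite-dimensional Ekeland principle: minimise [phi] over the compact sublevel
   set [phi z + k * en (z - x) <= phi x]; the descent hypothesis forbids [phi > 0] at
   a minimiser. *)
Lemma descent_zero (phi : V -> R) (x : V) (k : R) :
  0 < k -> continuous phi -> (forall z, 0 <= phi z) ->
  (forall z, k * en (z - x) <= phi x - phi z -> 0 < phi z ->
     exists z', phi z' < phi z /\ phi z' + k * en (z' - x) <= phi z + k * en (z - x)) ->
  exists z, phi z = 0 /\ k * en (z - x) <= phi x.
Proof.
move=> k0 cphi phi0 descent.
pose G z := phi z + k * en (z - x).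
have cG : continuous G.
  move=> z; apply: (@continuousD R R^o _ phi (fun z => k * en (z - x)) z (cphi z)).
  apply: enorm_delta_continuous => {}z e e0; exists (e / k) => [|w]; first by rewrite divr_gt0.
  rewrite -mulrBr normrM (gtr0_norm k0) [k * _]mulrC -ltr_pdivlMr // => wz.
  by apply: le_lt_trans wz; rewrite (le_trans (ler_enorm_dist_dist _ _)) // opprB addrA subrK.
pose S := [set z | G z <= phi x].
have cS : compact S.
  apply: (@enorm_bounded_compact _ x (phi x / k)).
    apply: (@preimage_closed _ _ G [set r | r <= phi x]) => [z _|]; first exact: cG.
    exact: closed_le.
  move=> z; rewrite /S /G /= => Gz; rewrite ler_pdivlMr // mulrC.
  by have := phi0 z; lra.
have S0 : S !=set0 by exists x; rewrite /S /G /= subrr enorm0 mulr0 addr0.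
have [z Sz zmin] := compact_EVT_min S0 cS (continuous_subspaceT cphi).
move: Sz; rewrite inE /S /G /= => Sz.
have [phiz0|] := ltrP 0 (phi z); last first.
  move=> phiz_le0; have phiz0 : phi z = 0 by apply/le_anti; rewrite phiz_le0 phi0.
  by exists z; split => //; move: Sz; rewrite phiz0; lra.
have [z' [lt' le']] := descent z ltac:(lra) phiz0.
suff : phi z <= phi z' by lra.
by apply: zmin; rewrite inE /S /G /=; lra.
Qed.

End EuclideanTopology.

Section LinearCovering.
Variables (R : realType) (n : nat).
Local Notation V := 'rV[R]_n.
Local Notation en := (@enorm R n).

Definition lin_covering_at (f : V -> V) (c : R) (x : V) : Prop := exists2 e, 0 < e &
  forall y, en (y - f x) < e -> exists z, f z = y /\ c * en (z - x) <= en (y - f x).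

Definition locally_injective_at (f : V -> V) (x : V) : Prop := exists2 d, 0 < d &
  forall u v, en (u - x) < d -> en (v - x) < d -> f u = f v -> u = v.

(* A point [z] with [f z <> y] is improved by covering, from [z], a point of the
   segment [[f z, y]] close enough to [f z]. *)
Lemma lin_covering_global (f : V -> V) (c : R) : 0 < c -> continuous f ->
  (forall x, lin_covering_at f c x) ->
  forall x y, exists z, f z = y /\ c * en (z - x) <= en (y - f x).
Proof.
move=> c0 cf cov x y.
have [||z [fzy zx]] := descent_zero (x := x) c0 (continuous_enorm_dist (y := y) cf).
- by move=> z; exact: enorm_ge0.
- move=> z _ E0; have [e e0 cov_z] := cov z.
  set E := en (f z - y) in E0 *.
  pose t := Num.min (1 / 2) (e / (2 * E)).
  have t0 : 0 < t by rewrite lt_min; apply/andP; split; [lra | rewrite divr_gt0 ?mulr_gt0].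
  have [t_half te] : t <= 1 / 2 /\ t <= e / (2 * E) by rewrite !ge_min !lexx ?orbT.
  have tE : t * E <= e / 2 by rewrite -ler_pdivlMr // -mulrA -invfM.
  have yt_dist : en (f z + t *: (y - f z) - f z) = t * E.
    by rewrite [f z + _]addrC addrK enormZ gtr0_norm // enorm_distC.
  have [z' [fz' z'z]] := cov_z (f z + t *: (y - f z)) ltac:(rewrite yt_dist; lra).
  rewrite yt_dist in z'z.
  have phi_z' : en (f z' - y) = (1 - t) * E.
    rewrite fz' -(@ger0_norm _ (1 - t)); last by lra.
    by rewrite -enormZ; congr en; apply/rowP => i; rewrite !mxE; ring.
  exists z'; rewrite phi_z'; split; first by nra.
  have := ler_wpM2l (ltW c0) (ler_enorm_distD z z' x); rewrite mulrDr => ?; lra.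
- by exists z; split; [apply/subr0_eq/enorm0_eq0 | rewrite [en (y - _)]enorm_distC].
Qed.

Lemma lin_open_with_estimate (h : V -> V) (x : V) (a b : R) :
  0 < b -> b < a -> lin_open_with h x a ->
  exists2 r, 0 < r & exists2 w, 0 < w & forall u, en (u - x) < r ->
    forall y, en (y - h x) < w -> exists z, h z = y /\ b * en (z - u) <= en (y - h u).
Proof.
move=> b0 ba [U [W [/nbhs_enormP [r r0 Ur] [/nbhs_enormP [w w0 Ww] hUW]]]].
exists r => //; exists w => // u ur y yw.
have [->|yhu] := eqVneq y (h u); first by exists u; rewrite !subrr enorm0 mulr0.
have D0 : 0 < en (y - h u).
  by rewrite lt0r enorm_ge0 andbT; apply: contra yhu => /eqP/enorm0_eq0/subr0_eq ->.
have [|z /= zu hzy] := hUW u (en (y - h u) / b) (Ur _ ur) (divr_gt0 D0 b0) y.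
  by split; [rewrite /oball /= mulrA ltr_pdivlMr //; nra | exact: Ww].
exists z; split => //.
by move: zu; rewrite /oball /= ltr_pdivlMr // mulrC => /ltW.
Qed.

End LinearCovering.

Section Perturbation.
Variables (R : realType) (n : nat).
Local Notation V := 'rV[R]_n.
Local Notation en := (@enorm R n).
Variables (f h : V -> V) (x : V) (l a b : R).
Hypotheses (cf : continuous f) (l0 : 0 < l) (lb : l < b) (ba : b < a)
  (hx : h x = f x) (lip : lip_near (fun z => f z - h z) x l)
  (op : lin_open_with h x a)
  (sr : exists U W, nbhs x U /\ nbhs (h x) W /\ forall y, W y -> exists! z, U z /\ h z = y).

Let g z := f z - h z.

Let perturbation_radii : exists r, exists2 w, 0 < r /\ 0 < w &
  [/\ forall u v, en (u - x) < 3 * r -> en (v - x) < 3 * r ->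
        en (g u - g v) <= l * en (u - v),
      forall u, en (u - x) < r -> forall y, en (y - f x) < w ->
        exists z, h z = y /\ b * en (z - u) <= en (y - h u),
      forall u, en (u - x) < r -> en (h u - f x) < w / 2 &
      forall y, en (y - f x) < w -> forall z1 z2, en (z1 - x) < 3 * r ->
        en (z2 - x) < 3 * r -> h z1 = y -> h z2 = y -> z1 = z2].
Proof.
have [U1 [W1 [/nbhs_enormP [r1 r10 Ur1] [+ uniq1]]]] := sr.
rewrite hx => /nbhs_enormP [w1 w10 Ww1].
have [r2 r20 [w2 w20]] := lin_open_with_estimate (lt_trans l0 lb) ba op.
rewrite hx => est.
have [U3 [/nbhs_enormP [r3 r30 Ur3] lipU3]] := lip.
pose w := Num.min w1 w2.
have w0 : 0 < w by rewrite lt_min w10.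
have [ww1 ww2] : w <= w1 /\ w <= w2 by rewrite !ge_min !lexx ?orbT.
have [tau tau0 ftau] := continuous_enorm_delta cf x (e := w / 4) ltac:(lra).
pose r := Num.min (Num.min (r1 / 3) r2) (Num.min (Num.min (r3 / 3) tau) (w / (4 * l))).
have r0 : 0 < r by rewrite !lt_min !divr_gt0 ?mulr_gt0 // r20 tau0.
have [[rr1 rr2] [[rr3 rtau] rw]] :
    (r <= r1 / 3 /\ r <= r2) /\ ((r <= r3 / 3 /\ r <= tau) /\ r <= w / (4 * l)).
  by rewrite /r !ge_min !lexx ?orbT.
have lipr u v : en (u - x) < 3 * r -> en (v - x) < 3 * r -> en (g u - g v) <= l * en (u - v).
  by move=> ur vr; apply: lipU3; apply: Ur3; lra.
exists r, w => //; split => //.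
- by move=> u ur y yw; apply: est; lra.
- move=> u ur.
  have -> : h u - f x = (f u - f x) - (g u - g x).
    by rewrite /g hx subrr subr0; apply/rowP => i; rewrite !mxE; ring.
  apply: le_lt_trans (ler_enormB _ _) _.
  have fu := ftau u ltac:(lra).
  have gu := lipr u x ltac:(lra) ltac:(rewrite subrr enorm0; lra).
  have : l * en (u - x) <= l * r by rewrite ler_pM2l // ltW.
  have : l * r <= w / 4 by move: rw; rewrite !ler_pdivlMr ?mulr_gt0 //; lra.
  lra.
- move=> y yw z1 z2 z1r z2r hz1 hz2.
  have [z0 [_ z0uniq]] := uniq1 y (Ww1 _ ltac:(lra)).
  by rewrite -(z0uniq z1) ?(z0uniq z2) //; split => //; apply: Ur1; lra.
Qed.

Lemma perturbation_locally_injective : locally_injective_at f x.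
Proof.
have [r [w [r0 w0] [lipr est hw uniq]]] := perturbation_radii.
exists r => // u v ur vr fuv.
have uv2r : en (u - v) < 2 * r.
  by have := ler_enorm_distD x u v; rewrite [en (x - v)]enorm_distC; lra.
have huv : en (h v - h u) <= l * en (u - v).
  have -> : h v - h u = g u - g v by rewrite /g fuv; apply/rowP => i; rewrite !mxE; ring.
  by apply: lipr; lra.
(* [h v] is reached from [u] within [l / b * en (u - v)]; by uniqueness of the local
   inverse of [h] this preimage is [v] itself, so [u = v]. *)
have [z [hzv zu]] := est u ur (h v) ltac:(have := hw v vr; lra).
have luv : l * en (u - v) <= b * en (u - v) by rewrite ler_wpM2r ?enorm_ge0 ?ltW.
have zux : en (z - x) < 3 * r.
  have : en (z - u) <= en (u - v) by rewrite -(ler_pM2l (lt_trans l0 lb)); lra.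
  by have := ler_enorm_distD u z x; lra.
have zv : z = v by apply: (uniq (h v)) => //; [have := hw v vr | ]; lra.
rewrite zv enorm_distC in zu.
have : (b - l) * en (u - v) <= 0 by rewrite mulrBl; lra.
rewrite pmulr_rle0 ?subr_gt0 // => uv0.
by apply/subr0_eq/enorm0_eq0/le_anti; rewrite uv0 enorm_ge0.
Qed.

Lemma perturbation_lin_covering : lin_covering_at f (b - l) x.
Proof.
have [r [w [r0 w0] [lipr est hw uniq]]] := perturbation_radii.
have bl0 : 0 < b - l by rewrite subr_gt0.
pose e := Num.min ((b - l) * r / 2) (w / 2).
have e0 : 0 < e by rewrite lt_min !divr_gt0 ?mulr_gt0.
have [er ew] : e <= (b - l) * r / 2 /\ e <= w / 2 by rewrite !ge_min !lexx ?orbT.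
exists e => // y ye.
have [||z [fzy zx]] := descent_zero (x := x) bl0 (continuous_enorm_dist (y := y) cf).
- by move=> z; exact: enorm_ge0.
- move=> z zx E0; set E := en (f z - y) in zx E0 *.
  rewrite enorm_distC in zx.
  have zr : en (z - x) < r / 2.
    rewrite -(ltr_pM2l bl0) mulrA; have := enorm_ge0 (z - x); nra.
  (* move [h z] by the residual [y - f z]; the perturbation [g] costs [l] per unit step *)
  set y' := h z + (y - f z).
  have y'w : en (y' - f x) < w.
    have -> : y' - f x = (h z - f x) + (y - f z).
      by rewrite /y'; apply/rowP => i; rewrite !mxE; ring.
    apply: le_lt_trans (ler_enormD _ _) _.
    have := hw z ltac:(lra); have := mulr_ge0 (ltW bl0) (enorm_ge0 (z - x)).
    by rewrite [en (y - f z)]enorm_distC -/E; lra.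
  have [z' [hz'y' z'z]] := est z ltac:(lra) y' y'w.
  rewrite /y' [h z + _]addrC addrK [en (y - _)]enorm_distC -/E in z'z.
  set D := en (z' - z) in z'z *.
  have D0 : 0 <= D by exact: enorm_ge0.
  have Dr : D < r / 2.
    rewrite -(ltr_pM2l (lt_trans l0 lb)).
    have := mulr_ge0 (ltW bl0) (enorm_ge0 (z - x)); have := mulr_gt0 l0 r0; lra.
  have z'x : en (z' - x) <= D + en (z - x) by exact: ler_enorm_distD.
  have fz'y : en (f z' - y) <= l * D.
    have -> : f z' - y = g z' - g z by rewrite /g hz'y'; apply/rowP => i; rewrite !mxE; ring.
    by apply: lipr; lra.
  exists z'; split.
    have [D00|Dpos] := eqVneq D 0; first by rewrite D00 mulr0 in fz'y; lra.
    have : l * D < b * D by rewrite ltr_pM2r // lt0r Dpos D0.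
    lra.
  have := ler_wpM2l (ltW bl0) z'x.
  by rewrite mulrDr mulrBl; lra.
- by exists z; split; [apply/subr0_eq/enorm0_eq0 | rewrite [en (y - _)]enorm_distC].
Qed.

End Perturbation.

Lemma compact_uniform_radius (R : realType) (X : topologicalType) (K : set X)
    (P : R -> X -> Prop) : compact K ->
  (forall x, K x -> exists A, exists2 e, nbhs x A /\ 0 < e &
     forall x' d, A x' -> 0 < d -> d < e -> P d x') ->
  exists2 d, 0 < d & forall x, K x -> P d x.
Proof.
move=> cK locP.
have nearP : \forall d \near (0 : R)^'+, K `<=` P d.
  apply: (compact_near_coveringP K).1 => // x Kx.
  have [A [e [Ax e0] AP]] := locP x Kx.
  exists (A, [set d | 0 < d /\ d < e]) => [|[x' d] /= [Ax' [d0 de]]]; last exact: AP.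
  split => //=; exists e => //= d.
  by rewrite /ball_ /= sub0r normrN => de d0; split => //; rewrite gtr0_norm in de.
have [d [KP d0]] : exists d, (K `<=` P d) /\ 0 < d.
  have proper0 : ProperFilter (0 : R)^'+ by exact: at_right_proper_filter.
  exact: (filter_ex (filterI nearP (nbhs_right_gt 0))).
by exists d => // x /KP.
Qed.

Lemma exists_nat_div_lt (R : realType) (A e : R) : 0 < e ->
  exists2 N : nat, (0 < N)%N & A / N%:R < e.
Proof.
move=> e0; exists (Num.truncn (A / e)).+1 => //.
by rewrite ltr_pdivrMr ?ltr0n // mulrC -ltr_pdivrMr // truncnS_gt.
Qed.

Lemma natr_div_le1 (R : realType) (N k : nat) : (k <= N)%N -> k%:R / N%:R <= 1 :> R.
Proof.
case: N => [|N] kN; first by rewrite invr0 mulr0 ler01.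
by rewrite ler_pdivrMr ?mul1r ?ler_nat // ltr0n.
Qed.

Section Injectivity.
Variables (R : realType) (n : nat).
Local Notation V := 'rV[R]_n.
Local Notation en := (@enorm R n).
Variables (f : V -> V) (c : R).
Hypotheses (c0 : 0 < c) (cf : continuous f)
  (cov : forall x y, exists z, f z = y /\ c * en (z - x) <= en (y - f x))
  (li : forall x, locally_injective_at f x).

Lemma locally_injective_uniform (K : set V) : compact K ->
  exists2 d, 0 < d & forall u, K u -> forall v, en (v - u) < d -> f v = f u -> v = u.
Proof.
move=> cK; apply: (@compact_uniform_radius R _ K
  (fun d u => forall v, en (v - u) < d -> f v = f u -> v = u) cK) => x _.
have [d d0 injd] := li x.
exists [set x' | en (x' - x) < d / 2], (d / 2) => [|x' e /= x'x e0 ed v vx' fv].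
  by split; [apply/nbhs_enormP; exists (d / 2) => [|//]; lra | lra].
have vx := ler_enorm_distD x' v x; apply: injd => //; lra.
Qed.

Variable a : V.

(* Lifting, from [a], of the segment from [f a] to [w] cut into [N] steps. *)
Definition radial (N : nat) (w : V) (k : nat) : V := f a + (k%:R / N%:R) *: (w - f a).

Definition is_lift (N : nat) (w : V) (z : nat -> V) : Prop := z 0%N = a /\
  forall k, (k < N)%N -> f (z k.+1) = radial N w k.+1 /\
    c * en (z k.+1 - z k) <= en (radial N w k.+1 - radial N w k).

Lemma radial_dist N w1 w2 k :
  en (radial N w2 k - radial N w1 k) = k%:R / N%:R * en (w2 - w1).
Proof.
have -> : radial N w2 k - radial N w1 k = (k%:R / N%:R) *: (w2 - w1).
  by apply/rowP => i; rewrite !mxE; ring.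
by rewrite enormZ ger0_norm // divr_ge0.
Qed.

Lemma radial_step N w k : en (radial N w k.+1 - radial N w k) = en (w - f a) / N%:R.
Proof.
have -> : radial N w k.+1 - radial N w k = N%:R^-1 *: (w - f a).
  rewrite /radial opprD addrACA subrr add0r -scalerBl; congr (_ *: _).
  by rewrite -mulrBl -[k.+1]addn1 natrD addrAC subrr add0r mul1r.
by rewrite enormZ ger0_norm ?invr_ge0 // mulrC.
Qed.

Lemma radial_last N w : (0 < N)%N -> radial N w N = w.
Proof.
move=> N0; rewrite /radial divff; last by rewrite pnatr_eq0 -lt0n.
by rewrite scale1r addrC subrK.
Qed.

Lemma lift_exists N w : exists z, is_lift N w z.
Proof.
have [step stepP] := choice (fun p : V * V => cov p.1 p.2).
pose z := fix z k := if k is k'.+1 then step (z k', radial N w k) else a.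
exists z; split => // k _.
have fzk : f (z k) = radial N w k.
  case: k => [|k]; first by rewrite /radial mul0r scale0r addr0.
  by have [] := stepP (z k, radial N w k.+1).
by have [] := stepP (z k, radial N w k.+1); rewrite /= fzk.
Qed.

Lemma lift_last N w z : (0 < N)%N -> is_lift N w z -> f (z N) = w.
Proof. by case: N => // N _ [_ zP]; have [-> _] := zP N (ltnSn N); exact: radial_last. Qed.

Lemma lift_near N M w z : 0 <= M -> en (w - f a) <= M -> is_lift N w z ->
  forall k, (k <= N)%N -> en (z k - a) <= M / c.
Proof.
move=> M0 wM [z0 zP].
suff bound k : (k <= N)%N -> c * en (z k - a) <= k%:R * (M / N%:R).
  move=> k kN; rewrite ler_pdivlMr // mulrC (le_trans (bound k kN)) //.
  by rewrite mulrA mulrAC -[leRHS]mul1r ler_wpM2r ?natr_div_le1.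
elim: k => [|k IH] kN; first by rewrite z0 subrr enorm0 mulr0 mul0r.
have [_] := zP k kN; rewrite radial_step => step.
have stepM : en (w - f a) / N%:R <= M / N%:R by rewrite ler_wpM2r // invr_ge0.
have := ler_wpM2l (ltW c0) (ler_enorm_distD (z k) (z k.+1) a).
have -> : k.+1%:R = k%:R + 1 :> R by rewrite -addn1 natrD.
rewrite mulrDr mulrDl mul1r; have := IH (ltnW kN); lra.
Qed.

(* At each step, covering from the first lift gives a preimage of the second target
   within [d] of the second lift, which uniform injectivity identifies with it. *)
Lemma lifts_close N M d w1 w2 z1 z2 : 0 <= M -> 0 < d ->
    (forall u, en (u - a) <= M / c -> forall v, en (v - u) < d -> f v = f u -> v = u) ->
    M / N%:R < c * (d / 4) ->
    en (w1 - f a) <= M -> en (w2 - f a) <= M -> en (w2 - w1) < c * (d / 4) ->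
    is_lift N w1 z1 -> is_lift N w2 z2 ->
  forall k, (k <= N)%N -> c * en (z2 k - z1 k) <= en (w2 - w1).
Proof.
move=> M0 d0 injM NM w1M w2M w12 L1 L2.
have [[z10 l1] [z20 l2]] := (L1, L2); elim=> [|k IH] kN.
  by rewrite z10 z20 subrr enorm0 mulr0 enorm_ge0.
have [f1 s1] := l1 k kN; have [f2 s2] := l2 k kN.
have [z' [fz' cz']] := cov (z1 k.+1) (radial N w2 k.+1).
rewrite f1 radial_dist in cz'; rewrite radial_step in s1; rewrite radial_step in s2.
have radial_le : k.+1%:R / N%:R * en (w2 - w1) <= en (w2 - w1).
  by rewrite -[leRHS]mul1r ler_wpM2r ?enorm_ge0 ?natr_div_le1.
have := IH (ltnW kN).
have : en (w1 - f a) / N%:R <= M / N%:R by rewrite ler_wpM2r // invr_ge0.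
have : en (w2 - f a) / N%:R <= M / N%:R by rewrite ler_wpM2r // invr_ge0.
move=> st2 st1 IHk.
have quarter X : c * X < c * (d / 4) -> X < d / 4 by rewrite ltr_pM2l.
have e1 : en (z' - z1 k.+1) < d / 4 by apply: quarter; lra.
have e2 : en (z1 k.+1 - z1 k) < d / 4 by apply: quarter; lra.
have e3 : en (z1 k - z2 k) < d / 4 by apply: quarter; rewrite enorm_distC; lra.
have e4 : en (z2 k - z2 k.+1) < d / 4 by apply: quarter; rewrite enorm_distC; lra.
suff <- : z' = z2 k.+1 by lra.
apply: injM; first exact: lift_near M0 w2M L2 _ kN.
  have := ler_enorm_distD (z1 k.+1) z' (z2 k.+1).
  have := ler_enorm_distD (z1 k) (z1 k.+1) (z2 k.+1).
  have := ler_enorm_distD (z2 k) (z1 k) (z2 k.+1); lra.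
by rewrite fz' f2.
Qed.

Variable b : V.
Hypothesis fab : f a = f b.

Let xs (s : R) : V := a + s *: (b - a).
Let ell (s : R) : V := f (xs s).

Let xs_dist s t : en (xs s - xs t) = `|s - t| * en (b - a).
Proof. by rewrite -enormZ; congr en; apply/rowP => i; rewrite !mxE; ring. Qed.

Let ell_continuous s0 e : 0 < e ->
  exists2 d, 0 < d & forall s, `|s - s0| < d -> en (ell s - ell s0) < e.
Proof.
move=> e0; have [d d0 xsd] := continuous_enorm_delta cf (xs s0) e0.
have ba0 := enorm_ge0 (b - a).
exists (d / (en (b - a) + 1)) => [|s]; first by rewrite divr_gt0 //; lra.
rewrite ltr_pdivlMr; last lra.
by move=> ss0; apply: xsd; rewrite xs_dist; have := normr_ge0 (s - s0); lra.
Qed.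

Let ell_bounded : exists2 M, 0 <= M & forall s, 0 <= s <= 1 -> en (ell s - f a) <= M.
Proof.
have seg0 : `[(0 : R), 1]%classic !=set0 by exists 0; rewrite /= in_itv /= lexx ler01.
have cell : continuous (fun s => en (ell s - f a)).
  move=> s0 A /nbhs_ballP [e e0 sub]; have [d d0 ds] := ell_continuous s0 e0.
  apply/nbhs_ballP; exists d => // s; rewrite -ball_normE /= distrC => /ds ss0.
  apply: sub; rewrite -ball_normE /= distrC (le_lt_trans (ler_enorm_dist_dist _ _)) //.
  by rewrite opprB addrA subrK.
have [s1 _ s1max] := compact_EVT_max seg0 (@segment_compact _ 0 1) (continuous_subspaceT cell).
exists (en (ell s1 - f a)); first exact: enorm_ge0.
by move=> s s01; apply: s1max; rewrite inE /= in_itv.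
Qed.

Let ell_uniform_continuous eta : 0 < eta -> exists2 d, 0 < d &
  forall s', 0 <= s' <= 1 -> forall s, `|s - s'| < d -> en (ell s - ell s') < eta.
Proof.
move=> eta0; suff [d d0 dP] : exists2 d, 0 < d & forall s', `[(0 : R), 1]%classic s' ->
    forall s, `|s - s'| < d -> en (ell s - ell s') < eta.
  by exists d => // s' s'01; apply: dP; rewrite /= in_itv.
apply: (@compact_uniform_radius R _ _
  (fun d s' => forall s, `|s - s'| < d -> en (ell s - ell s') < eta)).
  exact: segment_compact.
move=> s0 _; have [d1 d10 d1P] := ell_continuous s0 (e := eta / 2) ltac:(lra).
exists [set s' | `|s' - s0| < d1 / 2], (d1 / 2) => [|s' e /= s's0 e0 ed s ss'].
  split; last lra.
  by apply/nbhs_ballP; exists (d1 / 2) => [|s]; rewrite /= ?divr_gt0 // /ball /= distrC.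
have s0s : `|s - s0| < d1 by have := ler_distD s' s s0; lra.
have := d1P s s0s; have := d1P s' ltac:(lra).
have := ler_enorm_distD (ell s0) (ell s) (ell s').
by rewrite [en (ell s0 - _)]enorm_distC; lra.
Qed.

Let segment_mesh eta e : 0 < eta -> 0 < e -> exists2 m : nat, (0 < m)%N &
  forall j, (j < m)%N -> en (ell (j.+1%:R / m%:R) - ell (j%:R / m%:R)) < eta /\
    en (xs (j%:R / m%:R) - xs (j.+1%:R / m%:R)) < e.
Proof.
move=> eta0 e0; have [du du0 ellu] := ell_uniform_continuous eta0.
have ba0 := enorm_ge0 (b - a).
have mind0 : 0 < Num.min du e by rewrite lt_min du0.
have [m m0 mba] := exists_nat_div_lt (1 + en (b - a)) mind0.
have [m_du m_e] : 1 / m%:R < du /\ en (b - a) / m%:R < e.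
  have [mindu mine] : Num.min du e <= du /\ Num.min du e <= e by rewrite !ge_min !lexx ?orbT.
  by split; apply: le_lt_trans (lt_le_trans mba _) => //; rewrite ler_wpM2r ?invr_ge0 //; lra.
exists m => // j jm; have step : j.+1%:R / m%:R - j%:R / m%:R = 1 / m%:R :> R.
  by rewrite -mulrBl -natrB // subSnn.
split; last by rewrite xs_dist distrC step ger0_norm ?divr_ge0 // mul1r mulrC.
apply: ellu; last by rewrite step ger0_norm ?divr_ge0.
by rewrite divr_ge0 //= natr_div_le1 ?(ltnW jm).
Qed.

Let near_segment_injective M : exists2 d, 0 < d & forall u,
  en (u - a) <= M / c + en (b - a) -> forall v, en (v - u) < d -> f v = f u -> v = u.
Proof.
apply: (@locally_injective_uniform [set u | en (u - a) <= M / c + en (b - a)]).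
apply: (@enorm_bounded_compact _ _ _ a (M / c + en (b - a))) => //.
apply: (@preimage_closed _ _ (fun u : V => en (u - a)) [set r | r <= M / c + en (b - a)]).
  by move=> u _; apply: (@continuous_enorm_dist R n id a) => w.
exact: closed_le.
Qed.

Lemma covering_injective : a = b.
Proof.
have [M M0 ellM] := ell_bounded.
have [d d0 injK] := near_segment_injective M.
have ba0 := enorm_ge0 (b - a).
have injM u : en (u - a) <= M / c -> forall v, en (v - u) < d -> f v = f u -> v = u.
  by move=> ua; apply: injK; lra.
have eta0 : 0 < c * (d / 4) by rewrite mulr_gt0 // divr_gt0.
have [N N0 NM] := exists_nat_div_lt M eta0.
have [m m0 mesh] := segment_mesh eta0 (divr_gt0 d0 (ltr0n R 4)).
pose s (j : nat) : R := j%:R / m%:R.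
have s01 j : (j <= m)%N -> 0 <= s j <= 1 by move=> jm; rewrite divr_ge0 ?natr_div_le1.
have xsK j : (j <= m)%N -> en (xs (s j) - a) <= M / c + en (b - a).
  move=> /s01 /andP [sj0 sj1]; rewrite /xs addrC addKr enormZ ger0_norm //.
  have : 0 <= M / c by rewrite divr_ge0 // ltW.
  by have := ler_wpM2r ba0 sj1; rewrite mul1r; lra.
have const_lift : is_lift N (f a) (fun=> a).
  split => // k _; have rad k' : radial N (f a) k' = f a by rewrite /radial subrr scaler0 addr0.
  by rewrite !rad !subrr !enorm0 mulr0.
have ell0 : ell 0 = f a by rewrite /ell /xs scale0r addr0.
have lift_end j : (j <= m)%N -> forall z, is_lift N (ell (s j)) z -> z N = xs (s j).
  elim: j => [|j IH] jm z lz.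
    rewrite /s mul0r ell0 in lz *; rewrite /xs scale0r addr0.
    have [faM fa_eta] : en (f a - f a) <= M /\ en (f a - f a) < c * (d / 4).
      by rewrite subrr enorm0.
    have := lifts_close M0 d0 injM NM faM faM fa_eta const_lift lz (leqnn N).
    rewrite subrr enorm0 => zN; apply/subr0_eq/enorm0_eq0/le_anti.
    by rewrite enorm_ge0 andbT -(ler_pM2l c0) mulr0.
  have jm' := ltnW jm; have [z1 lz1] := lift_exists N (ell (s j)).
  have [ell_close xs_close] := mesh j jm.
  have := lifts_close M0 d0 injM NM (ellM _ (s01 _ jm')) (ellM _ (s01 _ jm)) ell_close lz1 lz.
  move=> /(_ N (leqnn N)); rewrite (IH jm' z1 lz1) => zN.
  have e1 : en (z N - xs (s j)) < d / 4.
    by rewrite -(ltr_pM2l c0); apply: le_lt_trans zN ell_close.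
  apply: (injK _ (xsK _ jm)); last by rewrite (lift_last N0 lz).
  by have := ler_enorm_distD (xs (s j)) (z N) (xs (s j.+1)); rewrite /s; lra.
have sm1 : s m = 1 by rewrite /s divff // pnatr_eq0 -lt0n.
have ell1 : ell (s m) = f a by rewrite sm1 /ell /xs scale1r addrC subrK fab.
have := lift_end m (leqnn m) (fun=> a); rewrite ell1 sm1 /xs scale1r addrC subrK => end_a.
exact: end_a const_lift.
Qed.

End Injectivity.

Lemma estimator_local_regularity (R : realType) (n : nat) (f : 'rV[R]_n -> 'rV[R]_n)
    (mu c : R) (h : 'rV[R]_n -> 'rV[R]_n -> 'rV[R]_n) :
  continuous f -> 0 <= mu -> 0 < c ->
  (forall x, strict_estimator mu f (h x) x /\ strongly_regular (h x) x) ->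
  ((mu + c)%:E < ereal_inf [set lop (h x) x | x in [set: 'rV[R]_n]])%E ->
  forall x, lin_covering_at f c x /\ locally_injective_at f x.
Proof.
move=> cf mu0 c0 est_reg sigma_gt x; have [[hx lipfh] [_ uniq]] := est_reg x.
have : ((mu + c)%:E < lop (h x) x)%E.
  by apply: lt_le_trans sigma_gt _; apply: ereal_inf_lbound; exists x.
rewrite /lop => /ereal_sup_gt [_ [->|[a [a0 opa] <-]]]; first by rewrite lte_fin; lra.
rewrite lte_fin => mu_a.
have : (lip (fun z => (f z - h x z)%R) x < (a - c)%:E)%E.
  by apply: le_lt_trans lipfh _; rewrite lte_fin; lra.
move=> /ereal_inf_lt [_ [l [l0 lipl] <-]]; rewrite lte_fin => l_ac.
have [lb ba] : l < c + l /\ c + l < a by lra.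
have := perturbation_lin_covering cf l0 lb ba hx lipl opa uniq; rewrite addrK => cov.
by split => //; exact: (perturbation_locally_injective cf l0 lb ba hx lipl opa uniq).
Qed.

Lemma exists_pos_addr_lt (R : realType) (mu : R) (s : \bar R) : (mu%:E < s)%E ->
  exists2 c, 0 < c & ((mu + c)%:E < s)%E.
Proof.
case: s => [s| |] //= mu_s; last by exists 1; rewrite ?ltry.
by exists ((s - mu) / 2); rewrite ?lte_fin; move: mu_s; rewrite lte_fin; lra.
Qed.

Lemma gap_mul_le (R : realType) (mu : R) (s : \bar R) (D E : R) :
  0 <= D -> 0 <= E -> (mu%:E < s)%E ->
  (forall c, 0 < c -> ((mu + c)%:E < s)%E -> c * D <= E) ->
  ((s - mu%:E) * D%:E <= E%:E)%E.
Proof.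
move=> D0 E0 mu_s gap.
have [->|Dpos] := eqVneq D 0; first by rewrite mule0 lee_fin.
have {Dpos}D0 : 0 < D by rewrite lt0r Dpos D0.
move: mu_s gap; case: s => [s| |] //= mu_s gap; last first.
  exfalso; have := gap ((E + 1) / D) ltac:(rewrite divr_gt0 //; lra) (ltry _).
  by rewrite divfK ?gt_eqF //; lra.
rewrite lte_fin in mu_s; rewrite -EFinB -EFinM lee_fin leNgt; apply/negP => ED.
(* otherwise [c] halfway between [E / D] and [s - mu] violates the hypothesis *)
pose c := (E / D + (s - mu)) / 2.
have ED_lt : E / D < s - mu by rewrite ltr_pdivrMr.
have c0 : 0 < c by rewrite /c; have := divr_ge0 E0 (ltW D0); lra.
have := gap c c0; rewrite lte_fin => /(_ ltac:(rewrite /c; lra)).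
by rewrite /c mulrAC mulrDl divfK ?gt_eqF //; lra.
Qed.

Unset Implicit Arguments.

Theorem mainTheorem5 (R : realType) (n : nat) (f : 'rV[R]_n -> 'rV[R]_n)
  (mu : R) (h : 'rV[R]_n -> 'rV[R]_n -> 'rV[R]_n) :
  continuous f -> 0 <= mu ->
  (forall x, strict_estimator mu f (h x) x /\ strongly_regular (h x) x) ->
  let sigma := ereal_inf [set lop (h x) x | x in [set: 'rV[R]_n]] in
  (mu%:E < sigma)%E ->
  exists g : 'rV[R]_n -> 'rV[R]_n,
    cancel f g /\ cancel g f /\
    forall y1 y2, ((sigma - mu%:E) * (enorm (g y1 - g y2))%:E
                   <= (enorm (y1 - y2))%:E)%E.
Proof.
move=> cf mu0 est_reg sigma mu_sigma.
have regular c (c0 : 0 < c) (c_sigma : ((mu + c)%:E < sigma)%E) :=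
  estimator_local_regularity cf mu0 c0 est_reg c_sigma.
have cov c : 0 < c -> ((mu + c)%:E < sigma)%E ->
    forall x y, exists z, f z = y /\ c * enorm (z - x) <= enorm (y - f x).
  by move=> c0 c_sigma; exact: lin_covering_global c0 cf (fun x => (regular c c0 c_sigma x).1).
have [c1 c10 c1_sigma] := exists_pos_addr_lt mu_sigma.
have finj : injective f.
  exact: covering_injective c10 cf (cov c1 c10 c1_sigma) (fun x => (regular c1 c10 c1_sigma x).2).
have fsurj y : exists x, f x = y by have [x [fx _]] := cov c1 c10 c1_sigma 0 y; exists x.
have [g fgK] := choice fsurj.
exists g; split; first by move=> x; apply: finj; rewrite fgK.
split=> [|y1 y2]; first exact: fgK.
apply: gap_mul_le; rewrite ?enorm_ge0 // => c c0 c_sigma.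
have [z [fz zg]] := cov c c0 c_sigma (g y2) y1.
have -> : g y1 = z by apply: finj; rewrite fgK.
by rewrite fgK in zg.
Qed.
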